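(* Let $n\ge2$, $\alpha\in[0,\pi/2)$, $A,B,C,D\in\Pi_{s,\alpha}^n$, $q\in\mathbb{C}$ with $0<|q|\le1$, and $f\in\mathcal{F}$. If $\mathcal{R}(A)\le\mathcal{R}(C)$ and $\mathcal{R}(B)\le\mathcal{R}(D)$, then \[ |q|\,w_q(A\sigma_fB)\le\sec^3(\alpha)\,w_q(C\sigma_fD). \]
   Context: For $\alpha\in[0,\pi/2)$, $S_\alpha=\{z\in\mathbb{C}:\operatorname{Re}z>0,\ |\operatorname{Im}z|\le\tan(\alpha)\operatorname{Re}z\}$, and $\Pi_{s,\alpha}^n$ is the set of $n\times n$ complex matrices whose numerical range is contained in $S_\alpha$. $\mathcal{R}(X)=\frac{X+X^*}{2}$, and $\le$ is the Loewner order. $\mathcal{F}$ is the set of operator monotone $f:(0,\infty)\to(0,\infty)$ with $f(1)=1$, each with a probability measure $\nu_f$ on $[0,1]$ such that $f(x)=\int_0^1((1-s)+sx^{-1})^{-1}d\nu_f(s)$. For accretive $X,Y$, $X!_sY=((1-s)X^{-1}+sY^{-1})^{-1}$ and $X\sigma_fY=\int_0^1(X!_sY)\,d\nu_f(s)$. $w_q(X)=\sup\{|\langle Xx,y\rangle|:\|x\|=\|y\|=1,\ \langle x,y\rangle=q\}$. *)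

From HB Require Import structures.
From mathcomp Require Import all_boot all_order all_algebra.
From mathcomp Require Import complex.
From mathcomp Require Import all_classical all_reals all_analysis.

Set Implicit Arguments.
Unset Strict Implicit.
Unset Printing Implicit Defensive.

Import Order.TTheory GRing.Theory Num.Theory.
Local Open Scope ring_scope.

Section Defs.
Variable R : realType.
Local Notation C := R[i].

Definition inner (n : nat) (x y : 'cV[C]_n) : C :=
  \sum_(i < n) x i 0 * conjc (y i 0).

Definition adjm (n : nat) (X : 'M[C]_n) : 'M[C]_n := map_mx (@conjc R) X^T.

Definition realpart (n : nat) (X : 'M[C]_n) : 'M[C]_n :=
  (2%:R)^-1 *: (X + adjm X).

(* positive semidefinite: <Mx,x> >= 0 (in the partial order of C) for all x *)
Definition psd (n : nat) (M : 'M[C]_n) : Prop :=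
  forall x : 'cV[C]_n, 0 <= inner (M *m x) x.

Definition loewner_le (n : nat) (X Y : 'M[C]_n) : Prop := psd (Y - X).

Definition in_sector (alpha : R) (z : C) : Prop :=
  0 < complex.Re z /\ `|complex.Im z| <= tan alpha * complex.Re z.

Definition in_Pi (alpha : R) (n : nat) (X : 'M[C]_n) : Prop :=
  forall x : 'cV[C]_n, inner x x = 1 -> in_sector alpha (inner (X *m x) x).

Definition harm_s (n : nat) (s : R) (X Y : 'M[C]_n) : 'M[C]_n :=
  invmx (((1 - s)%:C)%C *: invmx X + (s%:C)%C *: invmx Y).

Definition mx_integral (nu : probability R R) (n : nat) (F : R -> 'M[C]_n)
  : 'M[C]_n :=
  \matrix_(i < n, j < n)
    Complex (Rintegral nu `[0, 1]%classic (fun s => complex.Re (F s i j)))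
            (Rintegral nu `[0, 1]%classic (fun s => complex.Im (F s i j))).

Definition sigma_mean (nu : probability R R) (n : nat) (X Y : 'M[C]_n)
  : 'M[C]_n :=
  mx_integral nu (fun s => harm_s s X Y).

Definition wq (n : nat) (q : C) (X : 'M[C]_n) : R :=
  sup [set r : R | exists x y : 'cV[C]_n,
         [/\ inner x x = 1, inner y y = 1, inner x y = q &
             r = complex.Re `|inner (X *m x) y|]].

Definition unitary (m : nat) (U : 'M[C]_m) : Prop := adjm U *m U = 1%:M.

(* f(X) for a positive definite X = U diag(a) U^*, computed as U diag(f a) U^* *)
Definition diag_of (m : nat) (a : 'rV[R]_m) : 'M[C]_m :=
  diag_mx (map_mx (fun t : R => (t%:C)%C) a).

(* operator monotone on (0,oo): for all sizes m and all positive definite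
   X <= Y (given through unitary diagonalisations), f(X) <= f(Y) *)
Definition operator_monotone (f : R -> R) : Prop :=
  forall (m : nat) (U V : 'M[C]_m) (a b : 'rV[R]_m),
    unitary U -> unitary V ->
    (forall i, 0 < a 0 i) -> (forall i, 0 < b 0 i) ->
    loewner_le (U *m diag_of a *m adjm U) (V *m diag_of b *m adjm V) ->
    loewner_le (U *m diag_of (map_mx f a) *m adjm U)
               (V *m diag_of (map_mx f b) *m adjm V).

Definition in_classF (f : R -> R) : Prop :=
  [/\ forall x, 0 < x -> 0 < f x, operator_monotone f & f 1 = 1].

Definition represents (nu : probability R R) (f : R -> R) : Prop :=
  nu `[0, 1]%classic = 1%E /\
  forall x : R, 0 < x ->
    f x = Rintegral nu `[0, 1]%classic (fun s => ((1 - s) + s * x^-1)^-1).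

End Defs.

(* Write <X u, v> for inner (X *m u) v.  If |Im <X u, u>| <= t Re <X u, u> for all u, testing
   this at u + c v with c = -1 +- i t gives
     2 Re <X u, v> <= Re <X u, u> + (1 + t^2) Re <X v, v>,
   and 1 + tan^2 alpha = sec^2 alpha.  Applied to inverses, this bounds the s-harmonic mean
   A !_s B by sec^2 alpha times C !_s D in real part when R(A) <= R(C) and R(B) <= R(D);
   integrating in s against nu carries this bound, and the sector condition, over to the
   sigma_f means.  Finally the same inequality bounds |<X x, y>| by
   sec alpha (Re <X x, x> + Re <X y, y>) / 2, while |q| Re <Y z, z> <= w_q(Y) for every unit z
   (average over the two unit vectors qbar z +- sqrt(1 - |q|^2) u, u a unit vector orthogonal
   to z); together these give the factor sec^3 alpha. *)

From HB Require Import structures.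
From mathcomp Require Import all_boot all_order all_algebra.
From mathcomp Require Import complex.
From mathcomp Require Import all_classical all_reals all_analysis.
From mathcomp Require Import measurable_realfun.
From mathcomp.algebra_tactics Require Import ring lra.
Import Order.TTheory GRing.Theory Num.Theory.
Local Open Scope ring_scope.
Set Implicit Arguments.
Unset Strict Implicit.
Unset Printing Implicit Defensive.

Local Notation Re := complex.Re.
Local Notation Im := complex.Im.
(* The norm of R[i] is complex-valued; its real part is the modulus. *)
Local Notation modc z := (Re `|z|).

Section ComplexScalars.
Variable R : rcfType.
Implicit Types (x y z : R[i]) (r : R).

Lemma ReM x y : Re (x * y) = Re x * Re y - Im x * Im y.
Proof. by case: x => a b; case: y. Qed.

Lemma ImM x y : Im (x * y) = Re x * Im y + Im x * Re y.
Proof. by case: x => a b; case: y => c d /=; rewrite addrC. Qed.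

Lemma ReJ x : Re x^*%C = Re x. Proof. by case: x. Qed.

Lemma ImJ x : Im x^*%C = - Im x. Proof. by case: x. Qed.

Lemma Re_realM r x : Re (r%:C%C * x) = r * Re x.
Proof. by case: x => a b /=; rewrite mul0r subr0. Qed.

Lemma Im_realM r x : Im (r%:C%C * x) = r * Im x.
Proof. by case: x => a b /=; rewrite mul0r addr0. Qed.

Lemma real_complexN r : (- r)%:C%C = - r%:C%C :> R[i].
Proof. by apply/eqP; rewrite eq_complex /= oppr0 !eqxx. Qed.

Lemma modcE z : (modc z)%:C%C = `|z|.
Proof. by rewrite normc_def. Qed.

Lemma modc_lt r z : (r < modc z) = (r%:C%C < `|z|).
Proof. by rewrite -ltcR modcE. Qed.

Lemma modc_le r z : (modc z <= r) = (`|z| <= r%:C%C).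
Proof. by rewrite -lecR modcE. Qed.

Lemma modc_ge0 z : 0 <= modc z.
Proof. by rewrite normc_def /= sqrtr_ge0. Qed.

Lemma modc_eq0 z : modc z = 0 -> z = 0.
Proof. by move=> z0; apply/eqP; rewrite -normr_eq0 -modcE z0 rmorph0. Qed.

Lemma modcM x y : modc (x * y) = modc x * modc y.
Proof. by rewrite normrM -[`|x|]modcE -[`|y|]modcE -rmorphM. Qed.

Lemma modcJ z : modc z^*%C = modc z.
Proof. by rewrite normcJ. Qed.

Lemma modc_real r : modc r%:C%C = `|r|.
Proof. by rewrite normc_def /= expr0n addr0 sqrtr_sqr. Qed.

Lemma modcD x y : modc (x + y) <= modc x + modc y.
Proof.
have := ler_normD x y.
by rewrite -[`|x + y|]modcE -[`|x|]modcE -[`|y|]modcE -rmorphD lecR.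
Qed.

Lemma modc_sum (I : Type) (s : seq I) (F : I -> R[i]) :
  modc (\sum_(i <- s) F i) <= \sum_(i <- s) modc (F i).
Proof.
elim: s => [|a s IH]; first by rewrite !big_nil normr0.
by rewrite !big_cons (le_trans (modcD _ _)) ?lerD.
Qed.

Lemma Re_le_modc z : Re z <= modc z.
Proof.
case: z => a b; rewrite normc_def /= (le_trans (ler_norm a)) //.
by rewrite -sqrtr_sqr ler_wsqrtr // lerDl sqr_ge0.
Qed.

Lemma mulcJ_modc z : z * z^*%C = (modc z ^+ 2)%:C%C.
Proof. by rewrite -sqr_normc -[`|z|]modcE rmorphXn. Qed.

Lemma normr_Re_le_modc z : `|Re z| <= modc z.
Proof.
by rewrite ler_norml Re_le_modc andbT lerNl -raddfN /= (le_trans (Re_le_modc _)) ?normrN.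
Qed.

Lemma normr_Im_le_modc z : `|Im z| <= modc z.
Proof.
case: z => a b; rewrite normc_def /= -sqrtr_sqr ler_wsqrtr //.
by rewrite lerDr sqr_ge0.
Qed.

Lemma unimodular_mul_modc z : exists2 c : R[i], c * c^*%C = 1 & c * z = (modc z)%:C%C.
Proof.
have [->|z0] := eqVneq z 0.
  by exists 1; rewrite ?normr0 ?mulr0 // conjc1 mulr1.
have m0 : modc z != 0 by apply: contra_neq z0; apply: modc_eq0.
exists ((modc z)^-1%:C%C * z^*%C).
  rewrite mulcJ_modc modcM modc_real modcJ ger0_norm ?invr_ge0 ?modc_ge0 //.
  by rewrite mulVf // expr1n.
by rewrite -mulrA [z^*%C * z]mulrC mulcJ_modc -rmorphM expr2 mulKf.
Qed.

Lemma Re_mulE (c x : R[i]) : Re (c * x) = Re c * Re x + - Im c * Im x.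
Proof. by rewrite ReM mulNr. Qed.

Lemma Re_iM (x : R[i]) : Re ('i%C * x) = - Im x.
Proof. by rewrite mulrC ReiNIm. Qed.

End ComplexScalars.

Section InnerProduct.
Variables (R : realType) (n : nat).
Local Notation C := R[i].
Local Notation V := 'cV[C]_n.
Local Notation M := 'M[C]_n.
Implicit Types (u v w : V) (X Y : M) (c : C).

Lemma innerDl u v w : inner (u + v) w = inner u w + inner v w.
Proof. by rewrite /inner -big_split; apply: eq_bigr => i _; rewrite mxE mulrDl. Qed.

Lemma innerDr u v w : inner u (v + w) = inner u v + inner u w.
Proof. by rewrite /inner -big_split; apply: eq_bigr => i _; rewrite mxE rmorphD mulrDr. Qed.

Lemma innerBl u v w : inner (u - v) w = inner u w - inner v w.
Proof. by rewrite /inner -sumrB; apply: eq_bigr => i _; rewrite !mxE mulrBl. Qed.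

Lemma innerBr u v w : inner u (v - w) = inner u v - inner u w.
Proof. by rewrite /inner -sumrB; apply: eq_bigr => i _; rewrite !mxE rmorphB mulrBr. Qed.

Lemma innerZl c u v : inner (c *: u) v = c * inner u v.
Proof. by rewrite /inner mulr_sumr; apply: eq_bigr => i _; rewrite mxE mulrA. Qed.

Lemma innerZr c u v : inner u (c *: v) = c^*%C * inner u v.
Proof. by rewrite /inner mulr_sumr; apply: eq_bigr => i _; rewrite mxE rmorphM mulrCA. Qed.

Lemma inner0l v : inner 0 v = 0.
Proof. by rewrite /inner big1 // => i _; rewrite mxE mul0r. Qed.

Lemma inner_conj u v : inner v u = (inner u v)^*%C.
Proof. by rewrite /inner rmorph_sum; apply: eq_bigr => i _; rewrite rmorphM /= conjcK mulrC. Qed.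

Lemma inner_adjm X u v : inner (X *m u) v = inner u (adjm X *m v).
Proof.
rewrite /inner; under eq_bigr do rewrite mxE big_distrl /=.
rewrite exchange_big /=; apply: eq_bigr => j _.
rewrite mxE rmorph_sum mulr_sumr; apply: eq_bigr => i _.
by rewrite !mxE rmorphM /= conjcK mulrCA mulrA.
Qed.

Lemma adjmK X : adjm (adjm X) = X.
Proof. by apply/matrixP => i j; rewrite !mxE conjcK. Qed.

Lemma inner_selfE u : inner u u = (\sum_i modc (u i 0) ^+ 2)%:C%C.
Proof. by rewrite rmorph_sum; apply: eq_bigr => i _; rewrite mulcJ_modc. Qed.

Lemma inner_self_real u : inner u u = (Re (inner u u))%:C%C.
Proof. by rewrite inner_selfE. Qed.

Lemma Re_inner_self_ge0 u : 0 <= Re (inner u u).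
Proof. by rewrite inner_selfE /= sumr_ge0 // => i _; rewrite sqr_ge0. Qed.

Lemma Re_inner_self_eq0 u : Re (inner u u) = 0 -> u = 0.
Proof.
rewrite inner_selfE /= => /eqP; rewrite psumr_eq0 => [/allP u0|i _]; last exact: sqr_ge0.
apply/matrixP => i j; rewrite (ord1 j) mxE; apply: modc_eq0.
by move: (u0 i (mem_index_enum i)); rewrite implyTb sqrf_eq0 => /eqP.
Qed.

Definition qform X u := inner (X *m u) u.

Lemma qformDZ X u v c :
  qform X (u + c *: v) =
    qform X u + c^*%C * inner (X *m u) v + c * inner (X *m v) u + c * c^*%C * qform X v.
Proof.
rewrite /qform mulmxDr -scalemxAr !innerDl !innerDr !innerZl !innerZr.
by rewrite mulrA; ring.
Qed.

Lemma qformZ X c u : qform X (c *: u) = c * c^*%C * qform X u.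
Proof. by rewrite /qform -scalemxAr innerZl innerZr mulrA. Qed.

Lemma qform0 X : qform X 0 = 0.
Proof. by rewrite /qform mulmx0 inner0l. Qed.

Lemma qform_comb a b X Y u :
  qform (a *: X + b *: Y) u = a * qform X u + b * qform Y u.
Proof. by rewrite /qform mulmxDl -!scalemxAl innerDl !innerZl. Qed.

Lemma qform_realpart X u : qform (realpart X) u = (Re (qform X u))%:C%C.
Proof.
rewrite /qform /realpart -scalemxAl mulmxDl innerZl innerDl.
by rewrite [inner (adjm X *m u) _]inner_adjm adjmK [inner u _]inner_conj ReJ_add mulrC.
Qed.

Lemma loewner_le_Re X Y u :
  loewner_le (realpart X) (realpart Y) -> Re (qform X u) <= Re (qform Y u).
Proof.
move=> /(_ u); rewrite mulmxBl innerBl -!/(qform _ _) !qform_realpart -rmorphB lecR.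
by rewrite subr_ge0.
Qed.

Lemma qform_invmx X u :
  X \in unitmx -> qform (invmx X) u = (qform X (invmx X *m u))^*%C.
Proof. by move=> Xu; rewrite /qform mulKVmx // inner_conj. Qed.

Lemma inner_delta (u : V) i : inner u (delta_mx i 0) = u i 0.
Proof.
rewrite /inner (bigD1 i) //= big1 ?addr0 => [|k ki]; first by rewrite mxE !eqxx conjc1 mulr1.
by rewrite mxE (negbTE ki) conjc0 mulr0.
Qed.

End InnerProduct.

Section Sectorial.
Variables (R : realType) (n : nat).
Local Notation C := R[i].
Local Notation V := 'cV[C]_n.
Local Notation M := 'M[C]_n.
Implicit Types (u v w : V) (X Y : M) (t s : R).

Definition posdef X := forall u, u != 0 -> 0 < Re (qform X u).

Definition sectorial t X :=
  forall u, 0 <= Re (qform X u) /\ `|Im (qform X u)| <= t * Re (qform X u).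

Lemma posdef_unitmx X : posdef X -> X \in unitmx.
Proof.
move=> PX; rewrite unitmxE unitfE -det_tr; apply/negP => /det0P[v v0 vX].
have /PX : v^T != 0.
  by apply: contra_neq v0 => vT0; rewrite -[v]trmxK vT0 trmx0.
by rewrite /qform -[X]trmxK -trmx_mul vX trmx0 inner0l ltxx.
Qed.

Lemma posdef_invmx X : posdef X -> posdef (invmx X).
Proof.
move=> PX u u0; have Xu := posdef_unitmx PX.
rewrite qform_invmx // ReJ; apply: PX.
by apply: contra_neq u0 => Xu0; rewrite -(mulKVmx Xu u) Xu0 mulmx0.
Qed.

Lemma posdef_comb s X Y : 0 <= s <= 1 -> posdef X -> posdef Y ->
  posdef ((1 - s)%:C%C *: X + s%:C%C *: Y).
Proof.
move=> /andP[s0 s1] PX PY u u0; rewrite qform_comb raddfD /= !Re_realM.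
have Xu := PX u u0; have Yu := PY u u0.
move: s0; rewrite le_eqVlt => /predU1P[<-|s_gt0].
  by rewrite subr0 mul1r mul0r addr0.
by apply: ltr_wpDl; rewrite ?mulr_gt0 // mulr_ge0 ?subr_ge0 ?(ltW Xu).
Qed.

Lemma sectorial_invmx t X : X \in unitmx -> sectorial t X -> sectorial t (invmx X).
Proof. by move=> Xu St u; rewrite qform_invmx // ReJ ImJ normrN; apply: St. Qed.

Lemma sectorial_comb t s X Y : 0 <= s <= 1 -> sectorial t X -> sectorial t Y ->
  sectorial t ((1 - s)%:C%C *: X + s%:C%C *: Y).
Proof.
move=> /andP[s0 s1] SX SY u.
rewrite qform_comb [Re _]raddfD [Im _]raddfD /= !Re_realM !Im_realM.
have [X0 Xim] := SX u; have [Y0 Yim] := SY u.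
have s1' : 0 <= 1 - s by rewrite subr_ge0.
split; first by rewrite addr_ge0 ?mulr_ge0.
rewrite (le_trans (ler_normD _ _)) // !normrM (ger0_norm s1') (ger0_norm s0) mulrDr.
by rewrite lerD // mulrCA ler_wpM2l.
Qed.

Lemma sectorial_Re_inner_le t X u v : 0 <= t -> sectorial t X ->
  2 * Re (inner (X *m u) v) <= Re (qform X u) + (1 + t ^+ 2) * Re (qform X v).
Proof.
rewrite le_eqVlt => /predU1P[<-|t_gt0] St.
  (* For t = 0 the form is real, so Re <X u, v> = Re <X v, u>; then use u - v. *)
  have Im0 w : Im (qform X w) = 0 by have [_] := St w; rewrite mul0r normr_le0 => /eqP.
  have [Fuv_ge0 _] := St (u + (-1) *: v); have := Im0 (u + 'i%C *: v).
  move: Fuv_ge0; rewrite !qformDZ !raddfD /= !ReM !ImM /= !Im0 expr0n /= addr0 mul1r.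
  lra.
have [_] := St (u + (-1 +i* t)%C *: v); have [_] := St (u + (-1 +i* (- t))%C *: v).
rewrite !qformDZ !raddfD /= !ReM !ImM /= !ler_norml => /andP[_ h2] /andP[h1 _].
suff : 0 <= t * (Re (qform X u) + (1 + t ^+ 2) * Re (qform X v)
                  - 2 * Re (inner (X *m u) v)) by rewrite pmulr_rge0 // subr_ge0.
rewrite expr2; lra.
Qed.

Lemma sectorial_Re_inner_invmx_le t X u v : 0 <= t -> X \in unitmx -> sectorial t X ->
  2 * Re (inner u v) - Re (qform (invmx X) v) <= (1 + t ^+ 2) * Re (qform X u).
Proof.
move=> t0 Xu St; have := sectorial_Re_inner_le (invmx X *m v) u t0 St.
rewrite qform_invmx // ReJ mulKVmx // [inner v u]inner_conj ReJ; lra.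
Qed.

Lemma in_Pi_sector alpha X u : in_Pi alpha X -> u != 0 -> in_sector alpha (qform X u).
Proof.
move=> PiX u0; set r := Re (inner u u).
have r_gt0 : 0 < r.
  by rewrite lt_def Re_inner_self_ge0 andbT; apply: contra_neq u0; apply: Re_inner_self_eq0.
set k := (Num.sqrt r)^-1.
have kk : k%:C%C * (k%:C%C)^*%C = (r^-1)%:C%C.
  by rewrite conjc_real -rmorphM -expr2 exprVn sqr_sqrtr ?ltW.
have := PiX (k%:C%C *: u); rewrite -/(qform _ _) qformZ innerZl innerZr mulrA kk.
rewrite inner_self_real -rmorphM /= mulVf ?gt_eqF // => /(_ erefl) [].
have rV_gt0 : 0 < r^-1 by rewrite invr_gt0.
by rewrite !Re_realM Im_realM normrM (gtr0_norm rV_gt0) pmulr_rgt0 // mulrCA ler_pM2l.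
Qed.

Lemma in_Pi_posdef alpha X : in_Pi alpha X -> posdef X.
Proof. by move=> PiX u u0; have [] := in_Pi_sector PiX u0. Qed.

Lemma in_Pi_sectorial alpha X : in_Pi alpha X -> sectorial (tan alpha) X.
Proof.
move=> PiX u; have [->|u0] := eqVneq u 0; first by rewrite qform0 normr0 mulr0.
by have [/ltW] := in_Pi_sector PiX u0.
Qed.

Lemma sectorial_entry_le t X i j : 0 <= t -> sectorial t X ->
  2 * modc (X i j) <= Re (qform X (delta_mx j 0)) + (1 + t ^+ 2) * Re (qform X (delta_mx i 0)).
Proof.
move=> t0 SX; have [c cc cX] := unimodular_mul_modc (X i j).
have := sectorial_Re_inner_le (c *: delta_mx j 0) (delta_mx i 0) t0 SX.
by rewrite qformZ cc mul1r -scalemxAr innerZl inner_delta -colE mxE cX.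
Qed.

End Sectorial.

Section HarmonicMean.
Variables (R : realType) (n : nat).
Local Notation V := 'cV[R[i]]_n.
Local Notation M := 'M[R[i]]_n.
Implicit Types (A B C D : M) (t s : R).

Definition invmx_mix (s : R) (A B : M) := (1 - s)%:C%C *: invmx A + s%:C%C *: invmx B.

Lemma harm_sE s A B : harm_s s A B = invmx (invmx_mix s A B).
Proof. by []. Qed.

Lemma invmx_mix_unitmx s A B :
  0 <= s <= 1 -> posdef A -> posdef B -> invmx_mix s A B \in unitmx.
Proof.
by move=> s01 PA PB; apply: posdef_unitmx; apply: posdef_comb => //; apply: posdef_invmx.
Qed.

Lemma sectorial_harm t s A B : 0 <= s <= 1 -> posdef A -> posdef B ->
  sectorial t A -> sectorial t B -> sectorial t (harm_s s A B).
Proof.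
move=> s01 PA PB SA SB; rewrite harm_sE.
apply: (sectorial_invmx (invmx_mix_unitmx s01 PA PB)); apply: sectorial_comb => //.
  by apply: sectorial_invmx; rewrite ?posdef_unitmx.
by apply: sectorial_invmx; rewrite ?posdef_unitmx.
Qed.

(* With w := (invmx_mix s A B)^-1 z the left side equals both Re <z, w> and
   Re <invmx_mix s A B w, w>; split each along A and B. *)
Lemma Re_qform_harm_le_mix t s A B (a b : V) : 0 <= t -> 0 <= s <= 1 ->
  posdef A -> posdef B -> sectorial t A -> sectorial t B ->
  Re (qform (harm_s s A B) ((1 - s)%:C%C *: a + s%:C%C *: b))
    <= (1 + t ^+ 2) * ((1 - s) * Re (qform A a) + s * Re (qform B b)).
Proof.
move=> t0 s01 PA PB SA SB; have /andP[s0 s1] := s01.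
have ABu := invmx_mix_unitmx s01 PA PB.
set z := _ + _; set w := invmx (invmx_mix s A B) *m z.
have Fz_zw : Re (qform (harm_s s A B) z) = Re (inner z w).
  by rewrite harm_sE qform_invmx // ReJ /qform mulKVmx.
have Fz : Re (qform (harm_s s A B) z)
          = (1 - s) * Re (qform (invmx A) w) + s * Re (qform (invmx B) w).
  by rewrite harm_sE qform_invmx // ReJ -/w qform_comb raddfD /= !Re_realM.
have zw : Re (inner z w) = (1 - s) * Re (inner a w) + s * Re (inner b w).
  by rewrite innerDl !innerZl raddfD /= !Re_realM.
have -> : Re (qform (harm_s s A B) z)
          = (1 - s) * (2 * Re (inner a w) - Re (qform (invmx A) w))
            + s * (2 * Re (inner b w) - Re (qform (invmx B) w)).
  by move: Fz_zw Fz zw; lra.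
rewrite [X in _ <= X]mulrDr !(mulrCA (1 + t ^+ 2)).
apply: lerD; apply: ler_wpM2l; rewrite ?subr_ge0 //.
  exact: sectorial_Re_inner_invmx_le t0 (posdef_unitmx PA) SA.
exact: sectorial_Re_inner_invmx_le t0 (posdef_unitmx PB) SB.
Qed.

Lemma Re_qform_harm_le t s A B C D (z : V) : 0 <= t -> 0 <= s <= 1 ->
  posdef A -> posdef B -> posdef C -> posdef D -> sectorial t A -> sectorial t B ->
  loewner_le (realpart A) (realpart C) -> loewner_le (realpart B) (realpart D) ->
  Re (qform (harm_s s A B) z) <= (1 + t ^+ 2) * Re (qform (harm_s s C D) z).
Proof.
move=> t0 s01 PA PB PC PD SA SB AC BD; have /andP[s0 s1] := s01.
have CDu := invmx_mix_unitmx s01 PC PD.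
set w := invmx (invmx_mix s C D) *m z.
have Fz : Re (qform (harm_s s C D) z)
          = (1 - s) * Re (qform (invmx C) w) + s * Re (qform (invmx D) w).
  by rewrite harm_sE qform_invmx // ReJ -/w qform_comb raddfD /= !Re_realM.
have zE : z = (1 - s)%:C%C *: (invmx C *m w) + s%:C%C *: (invmx D *m w).
  by rewrite !scalemxAl -mulmxDl mulKVmx.
rewrite {1}zE Fz; apply: (le_trans (Re_qform_harm_le_mix _ _ t0 s01 PA PB SA SB)).
apply: ler_wpM2l; first by rewrite addr_ge0 ?sqr_ge0.
apply: lerD; apply: ler_wpM2l; rewrite ?subr_ge0 //.
  by rewrite qform_invmx ?posdef_unitmx // ReJ; apply: loewner_le_Re.
by rewrite qform_invmx ?posdef_unitmx // ReJ; apply: loewner_le_Re.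
Qed.

End HarmonicMean.

Section ComplexMeasurable.
Variables (R : realType) (D : set R).
Implicit Types (g : R -> R) (h k : R -> R[i]).

Definition cmeasurable_fun h :=
  measurable_fun D (fun s => Re (h s)) /\ measurable_fun D (fun s => Im (h s)).

Lemma eq_cmeasurable_fun h k :
  (forall s, D s -> h s = k s) -> cmeasurable_fun h -> cmeasurable_fun k.
Proof.
move=> hk [mRe mIm].
by split; [apply: (eq_measurable_fun _ _ mRe) | apply: (eq_measurable_fun _ _ mIm)]
  => s /[!inE] Ds; rewrite hk.
Qed.

Lemma cmeasurable_cst (c : R[i]) : cmeasurable_fun (fun=> c).
Proof. by split; apply: measurable_cst. Qed.

Lemma cmeasurable_real g : measurable_fun D g -> cmeasurable_fun (fun s => (g s)%:C%C).
Proof. by split => //=; apply: measurable_cst. Qed.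

Lemma cmeasurable_add h k :
  cmeasurable_fun h -> cmeasurable_fun k -> cmeasurable_fun (fun s => h s + k s).
Proof.
move=> [hRe hIm] [kRe kIm]; split.
  by under eq_fun do rewrite raddfD; apply: measurable_funD.
by under eq_fun do rewrite raddfD; apply: measurable_funD.
Qed.

Lemma cmeasurable_mul h k :
  cmeasurable_fun h -> cmeasurable_fun k -> cmeasurable_fun (fun s => h s * k s).
Proof.
move=> [hRe hIm] [kRe kIm]; split.
  by under eq_fun do rewrite ReM; apply: measurable_funB; apply: measurable_funM.
by under eq_fun do rewrite ImM; apply: measurable_funD; apply: measurable_funM.
Qed.

Lemma cmeasurable_sum (I : Type) (r : seq I) (F : I -> R -> R[i]) :
  (forall i, cmeasurable_fun (F i)) -> cmeasurable_fun (fun s => \sum_(i <- r) F i s).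
Proof.
move=> mF; elim: r => [|a r IH]; first by under eq_fun do rewrite big_nil; apply: cmeasurable_cst.
by under eq_fun do rewrite big_cons; apply: cmeasurable_add.
Qed.

Lemma cmeasurable_prod (I : Type) (r : seq I) (F : I -> R -> R[i]) :
  (forall i, cmeasurable_fun (F i)) -> cmeasurable_fun (fun s => \prod_(i <- r) F i s).
Proof.
move=> mF; elim: r => [|a r IH]; first by under eq_fun do rewrite big_nil; apply: cmeasurable_cst.
by under eq_fun do rewrite big_cons; apply: cmeasurable_mul.
Qed.

Lemma measurable_fun_inv g :
  measurable_fun D g -> (forall s, D s -> g s != 0) -> measurable_fun D (fun s => (g s)^-1).
Proof.
move=> mg g0; apply: (measurable_comp (F := [set x : R | x != 0])) mg.
- by apply: open_measurable; apply: open_neq.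
- by move=> _ [s Ds <-]; apply: g0.
apply: open_continuous_measurable_fun; first exact: open_neq.
by move=> x /[!inE] x0; apply: inv_continuous.
Qed.

Lemma cmeasurable_inv h :
  cmeasurable_fun h -> (forall s, D s -> h s != 0) -> cmeasurable_fun (fun s => (h s)^-1).
Proof.
move=> [hRe hIm] h0.
have mN : measurable_fun D (fun s => (Re (h s) ^+ 2 + Im (h s) ^+ 2)^-1).
  apply: measurable_fun_inv; first by apply: measurable_funD; apply: measurable_funX.
  move=> s Ds; apply: contra (h0 s Ds); case: (h s) => a b /=.
  by rewrite paddr_eq0 ?sqr_ge0 // !sqrf_eq0 => /andP[/eqP -> /eqP ->].
have invE (x : R[i]) : x^-1 = ((Re x * (Re x ^+ 2 + Im x ^+ 2)^-1)
                               +i* (- Im x * (Re x ^+ 2 + Im x ^+ 2)^-1))%C.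
  by case: x => a b; rewrite mulNr.
split; under eq_fun do rewrite invE /=; apply: measurable_funM => //.
exact: measurable_funN.
Qed.

Lemma cmeasurable_det m (F : R -> 'M[R[i]]_m) :
  (forall i j, cmeasurable_fun (fun s => F s i j)) -> cmeasurable_fun (fun s => \det (F s)).
Proof.
move=> mF; apply: cmeasurable_sum => sg; apply: cmeasurable_mul; first exact: cmeasurable_cst.
by apply: cmeasurable_prod.
Qed.

End ComplexMeasurable.

Section MatrixIntegral.
Variables (R : realType) (nu : probability R R).
Local Notation I01 := (`[0, 1]%classic : set R).
Local Notation Rint f := (Rintegral nu I01 f).
Local Notation itg f := (nu.-integrable I01 (EFin \o f)).
Implicit Types (f g : R -> R) (h : R -> R[i]).

Lemma measurable_I01 : measurable I01.
Proof. exact: measurable_itv. Qed.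
Local Notation mI := measurable_I01.

Lemma bounded_integrable f (M : R) :
  measurable_fun I01 f -> (forall s, I01 s -> `|f s| <= M) -> itg f.
Proof.
move=> mf fM; apply: measurable_bounded_integrable => //.
  by rewrite (le_lt_trans (probability_le1 nu mI)) ?ltry.
rewrite /bounded_near; near=> N => s I01s /=; rewrite (le_trans (fM s I01s)) //.
Unshelve. all: by end_near.
Qed.

Lemma integrableRZl (a : R) f : itg f -> itg (fun s => a * f s).
Proof.
by move=> If; apply: (eq_integrable mI _ _ _ (integrableZl mI a If)) => s _ /=; rewrite EFinM.
Qed.

Lemma integrableRD f g : itg f -> itg g -> itg (fun s => f s + g s).
Proof.
by move=> If Ig; apply: (eq_integrable mI _ _ _ (integrableD mI If Ig)) => s _ /=; rewrite EFinD.
Qed.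

Lemma integrableR_sum (I : Type) (r : seq I) (F : I -> R -> R) :
  (forall i, itg (F i)) -> itg (fun s => \sum_(i <- r) F i s).
Proof.
move=> IF; apply: (eq_integrable mI _ _ _ (integrable_sum mI r (fun i _ => IF i))).
by move=> s _ /=; rewrite sumEFin.
Qed.

Lemma Rintegral_sum (I : Type) (r : seq I) (F : I -> R -> R) :
  (forall i, itg (F i)) -> Rint (fun s => \sum_(i <- r) F i s) = \sum_(i <- r) Rint (F i).
Proof.
move=> IF; elim: r => [|a r IH].
  rewrite big_nil -[RHS](mul0r (fine (nu I01))) -Rintegral_cst //.
  by apply: eq_Rintegral => s _; rewrite big_nil.
rewrite big_cons -IH -RintegralD //; last exact: integrableR_sum.
by apply: eq_Rintegral => s _; rewrite big_cons.
Qed.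

Definition cintegrable h := itg (fun s => Re (h s)) /\ itg (fun s => Im (h s)).

Lemma integrable_Re_mul (c : R[i]) h : cintegrable h -> itg (fun s => Re (c * h s)).
Proof.
move=> [IRe IIm]; have := integrableRD (integrableRZl (Re c) IRe) (integrableRZl (- Im c) IIm).
by apply: eq_integrable => // s _ /=; rewrite Re_mulE.
Qed.

Lemma Rintegral_Re_mul (c : R[i]) h : cintegrable h ->
  Rint (fun s => Re (c * h s)) = Re (c * (Rint (fun s => Re (h s)) +i* Rint (fun s => Im (h s)))%C).
Proof.
move=> [IRe IIm]; rewrite Re_mulE /= -!RintegralZl // -RintegralD //; last 2 first.
- exact: integrableRZl.
- exact: integrableRZl.
by apply: eq_Rintegral => s _; rewrite Re_mulE.
Qed.

Variable n : nat.
Implicit Types (F G : R -> 'M[R[i]]_n) (z : 'cV[R[i]]_n).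

Lemma Re_mul_qformE (c : R[i]) (X : 'M[R[i]]_n) z :
  Re (c * qform X z) = \sum_i \sum_j Re (c * (z j 0 * (z i 0)^*%C) * X i j).
Proof.
rewrite /qform /inner mulr_sumr raddf_sum; apply: eq_bigr => i _ /=.
rewrite mxE big_distrl mulr_sumr raddf_sum; apply: eq_bigr => j _ /=.
by congr (Re _); ring.
Qed.

Lemma integrable_Re_mul_qform (c : R[i]) F z :
  (forall i j, cintegrable (fun s => F s i j)) -> itg (fun s => Re (c * qform (F s) z)).
Proof.
move=> IF; have : itg (fun s => \sum_i \sum_j Re (c * (z j 0 * (z i 0)^*%C) * F s i j)).
  by do 2!apply: integrableR_sum => ?; apply: integrable_Re_mul.
by apply: eq_integrable => // s _ /=; rewrite Re_mul_qformE.
Qed.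

Lemma Re_mul_qform_mx_integral (c : R[i]) F z :
  (forall i j, cintegrable (fun s => F s i j)) ->
  Re (c * qform (mx_integral nu F) z) = Rint (fun s => Re (c * qform (F s) z)).
Proof.
move=> IF.
transitivity (Rint (fun s => \sum_i \sum_j Re (c * (z j 0 * (z i 0)^*%C) * F s i j))).
  2: by apply: eq_Rintegral => s _; rewrite Re_mul_qformE.
rewrite Re_mul_qformE Rintegral_sum => [|i]; last first.
  by apply: integrableR_sum => j; apply: integrable_Re_mul.
apply: eq_bigr => i _; rewrite Rintegral_sum => [|j]; last exact: integrable_Re_mul.
by apply: eq_bigr => j _; rewrite Rintegral_Re_mul // mxE.
Qed.

Lemma Re_qform_mx_integral_ge0 F z :
  (forall i j, cintegrable (fun s => F s i j)) ->
  (forall s, I01 s -> 0 <= Re (qform (F s) z)) -> 0 <= Re (qform (mx_integral nu F) z).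
Proof.
move=> IF F0; rewrite -[qform _ _]mul1r Re_mul_qform_mx_integral //.
by apply: Rintegral_ge0 => s /F0; rewrite mul1r.
Qed.

Lemma Re_mul_qform_mx_integral_le (c : R[i]) (k : R) F G z :
  (forall i j, cintegrable (fun s => F s i j)) ->
  (forall i j, cintegrable (fun s => G s i j)) ->
  (forall s, I01 s -> Re (c * qform (F s) z) <= k * Re (qform (G s) z)) ->
  Re (c * qform (mx_integral nu F) z) <= k * Re (qform (mx_integral nu G) z).
Proof.
move=> IF IG FG; rewrite -[qform (mx_integral nu G) z]mul1r !Re_mul_qform_mx_integral //.
rewrite -RintegralZl //; last exact: integrable_Re_mul_qform.
apply: (le_Rintegral mI) => [||s /FG]; last by rewrite mul1r.
- exact: integrable_Re_mul_qform.
- by apply: integrableRZl; apply: integrable_Re_mul_qform.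
Qed.

Lemma Re_qform_mx_integral_le (k : R) F G z :
  (forall i j, cintegrable (fun s => F s i j)) ->
  (forall i j, cintegrable (fun s => G s i j)) ->
  (forall s, I01 s -> Re (qform (F s) z) <= k * Re (qform (G s) z)) ->
  Re (qform (mx_integral nu F) z) <= k * Re (qform (mx_integral nu G) z).
Proof.
move=> IF IG FG; rewrite -[qform (mx_integral nu F) z]mul1r.
by apply: Re_mul_qform_mx_integral_le => // s /FG; rewrite mul1r.
Qed.

End MatrixIntegral.

Section SigmaMean.
Variables (R : realType) (nu : probability R R) (n : nat).
Local Notation I01 := (`[0, 1]%classic : set R).
Local Notation V := 'cV[R[i]]_n.
Local Notation M := 'M[R[i]]_n.
Implicit Types (A B C D X : M) (t : R).

Lemma in_I01 (s : R) : I01 s -> 0 <= s <= 1.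
Proof. by rewrite /= in_itv. Qed.

Lemma cmeasurable_harm A B i j : posdef A -> posdef B ->
  cmeasurable_fun I01 (fun s => harm_s s A B i j).
Proof.
move=> PA PB.
have mix k l : cmeasurable_fun I01 (fun s => invmx_mix s A B k l).
  apply: (eq_cmeasurable_fun (h := fun s => (1 - s)%:C%C * invmx A k l + s%:C%C * invmx B k l)).
    by move=> s _; rewrite !mxE.
  apply: cmeasurable_add; apply: cmeasurable_mul; rewrite ?cmeasurable_cst //.
    by apply: cmeasurable_real; apply: measurable_funB.
  exact: cmeasurable_real.
have unit s : I01 s -> invmx_mix s A B \in unitmx.
  by move=> /in_I01 s01; apply: invmx_mix_unitmx.
(* Cramer's rule *)
apply: (eq_cmeasurable_fun
  (h := fun s => (\det (invmx_mix s A B))^-1 * cofactor (invmx_mix s A B) j i)).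
  by move=> s I01s; rewrite harm_sE /invmx unit // !mxE.
apply: cmeasurable_mul.
  apply: cmeasurable_inv; first exact: cmeasurable_det.
  by move=> s /unit; rewrite unitmxE unitfE.
apply: cmeasurable_mul; first exact: cmeasurable_cst.
apply: cmeasurable_det => k l.
by apply: (eq_cmeasurable_fun (h := fun s => invmx_mix s A B (lift j k) (lift i l))) => // s _; rewrite !mxE.
Qed.

Lemma harm_entry_bound t A B i j : 0 <= t -> posdef A -> posdef B ->
  sectorial t A -> sectorial t B ->
  exists K, forall s, I01 s -> modc (harm_s s A B i j) <= K.
Proof.
move=> t0 PA PB SA SB; set T := 1 + t ^+ 2.
have T0 : 0 <= T by rewrite addr_ge0 ?sqr_ge0.
pose G k := Re (qform A (delta_mx k 0)) + Re (qform B (delta_mx k 0)).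
have HG s k : I01 s -> Re (qform (harm_s s A B) (delta_mx k 0)) <= T * G k.
  move=> /in_I01 s01; have /andP[s0 s1] := s01.
  have := Re_qform_harm_le_mix (delta_mx k 0) (delta_mx k 0) t0 s01 PA PB SA SB.
  rewrite -scalerDl -rmorphD subrK scale1r => /le_trans; apply; apply: ler_wpM2l => //.
  have [A0 _] := SA (delta_mx k 0); have [B0 _] := SB (delta_mx k 0).
  by apply: lerD; rewrite ler_piMl // lerBlDr lerDl.
exists (T * G j + T * (T * G i)) => s I01s.
have := sectorial_entry_le i j t0 (sectorial_harm (in_I01 I01s) PA PB SA SB).
have := ler_wpM2l T0 (HG s i I01s); have := HG s j I01s.
have := modc_ge0 (harm_s s A B i j); rewrite -/T; lra.
Qed.

Lemma cintegrable_harm t A B i j : 0 <= t -> posdef A -> posdef B ->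
  sectorial t A -> sectorial t B -> cintegrable nu (fun s => harm_s s A B i j).
Proof.
move=> t0 PA PB SA SB; have [mRe mIm] := cmeasurable_harm i j PA PB.
have [K HK] := harm_entry_bound i j t0 PA PB SA SB.
split; apply: (bounded_integrable nu (M := K)) => // s I01s; apply: le_trans (HK s I01s).
  exact: normr_Re_le_modc.
exact: normr_Im_le_modc.
Qed.

Lemma sectorial_sigma_mean t A B : 0 <= t -> posdef A -> posdef B ->
  sectorial t A -> sectorial t B -> sectorial t (sigma_mean nu A B).
Proof.
move=> t0 PA PB SA SB u.
have Hint := cintegrable_harm _ _ t0 PA PB SA SB.
have SH s : I01 s -> sectorial t (harm_s s A B).
  by move=> I01s; apply: sectorial_harm (in_I01 I01s) PA PB SA SB.
(* Both bounds on Im are of the form Re (c * .) <= t * Re, for c = i and c = -i. *)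
have le_t c : (forall x, `|Im x| <= t * Re x -> Re (c * x) <= t * Re x) ->
    Re (c * qform (sigma_mean nu A B) u) <= t * Re (qform (sigma_mean nu A B) u).
  by move=> cx; apply: Re_mul_qform_mx_integral_le => // s /SH /(_ u) [_ /cx].
split; first by apply: Re_qform_mx_integral_ge0 => // s /SH /(_ u) [].
rewrite ler_norml lerNl -Re_iM le_t => [|x]; last by rewrite Re_iM ler_norml lerNl => /andP[].
rewrite -[X in X <= _]opprK -Re_iM -raddfN /= -mulNr le_t // => x.
by rewrite mulNr raddfN /= Re_iM opprK ler_norml => /andP[].
Qed.

Lemma Re_qform_sigma_mean_le t A B C D (z : V) : 0 <= t ->
  posdef A -> posdef B -> posdef C -> posdef D ->
  sectorial t A -> sectorial t B -> sectorial t C -> sectorial t D ->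
  loewner_le (realpart A) (realpart C) -> loewner_le (realpart B) (realpart D) ->
  Re (qform (sigma_mean nu A B) z) <= (1 + t ^+ 2) * Re (qform (sigma_mean nu C D) z).
Proof.
move=> t0 PA PB PC PD SA SB SC SD AC BD.
apply: Re_qform_mx_integral_le => [i j|i j|s I01s].
- exact: cintegrable_harm t0 PA PB SA SB.
- exact: cintegrable_harm t0 PC PD SC SD.
exact: Re_qform_harm_le t0 (in_I01 I01s) PA PB PC PD SA SB AC BD.
Qed.

End SigmaMean.

Section QNumericalRadius.
Variables (R : realType) (n : nat).
Local Notation V := 'cV[R[i]]_n.
Local Notation M := 'M[R[i]]_n.
Implicit Types (x y z u : V) (X Y : M) (q : R[i]) (t sg : R).

Lemma unit_vector_sum x : inner x x = 1 -> \sum_i modc (x i 0) ^+ 2 = 1.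
Proof. by rewrite inner_selfE => /(congr1 (@complex.Re R)). Qed.

Lemma modc_coord_le1 x i : inner x x = 1 -> modc (x i 0) <= 1.
Proof.
move=> /unit_vector_sum x1; rewrite -(expr_le1 (isT : (0 < 2)%N)) ?modc_ge0 //.
by rewrite -x1 (bigD1 i) //= lerDl sumr_ge0 // => j _; rewrite sqr_ge0.
Qed.

Lemma modc_inner_le_sum X x y : inner x x = 1 -> inner y y = 1 ->
  modc (inner (X *m x) y) <= \sum_i \sum_j modc (X i j).
Proof.
move=> x1 y1; rewrite /inner; apply: (le_trans (modc_sum _ _)); apply: ler_sum => i _.
rewrite mxE big_distrl /=; apply: (le_trans (modc_sum _ _)); apply: ler_sum => j _.
rewrite !modcM modcJ -[leRHS]mulr1 -mulrA ler_wpM2l ?modc_ge0 //.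
by rewrite -[1]mulr1 ler_pM ?modc_ge0 ?modc_coord_le1.
Qed.

Lemma wq_ge q X x y : inner x x = 1 -> inner y y = 1 -> inner x y = q ->
  modc (inner (X *m x) y) <= wq q X.
Proof.
move=> x1 y1 xy; apply: ub_le_sup; last by exists x, y.
by exists (\sum_i \sum_j modc (X i j)) => _ [x' [y' [x'1 y'1 _ ->]]]; apply: modc_inner_le_sum.
Qed.

Lemma wq_le q X (K : R) : (exists x y, [/\ inner x x = 1, inner y y = 1 & inner x y = q]) ->
  (forall x y, inner x x = 1 -> inner y y = 1 -> inner x y = q -> modc (inner (X *m x) y) <= K) ->
  wq q X <= K.
Proof.
move=> [x [y [x1 y1 xy]]] XK; apply: ge_sup; first by exists (modc (inner (X *m x) y)), x, y.
by move=> _ [x' [y' [x'1 y'1 x'y' ->]]]; apply: XK.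
Qed.

Lemma exists_orthogonal_unit z : (2 <= n)%N -> inner z z = 1 ->
  exists2 u, inner u u = 1 & inner z u = 0.
Proof.
move=> n2 z1; pose m k := modc (z k 0) ^+ 2.
have [k mk] : exists k, m k < 1.
  pose i0 : 'I_n := Ordinal (ltnW n2); pose i1 : 'I_n := Ordinal n2.
  have m01 : m i0 + m i1 <= 1.
    rewrite -(unit_vector_sum z1) (bigD1 i0) //= (bigD1 i1) //= addrA lerDl.
    by rewrite sumr_ge0 // => i _; rewrite sqr_ge0.
  have [mi0|mi0] := ltP (m i0) 1; first by exists i0.
  by exists i1; lra.
set e : V := delta_mx k 0; set w := z k 0.
have ez : inner e z = w^*%C by rewrite inner_conj inner_delta.
pose v : V := e - w^*%C *: z.
have zv : inner z v = 0 by rewrite innerBr innerZr inner_delta conjcK z1 mulr1 subrr.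
have vv : inner v v = (1 - m k)%:C%C.
  have ee : inner e e = 1 by rewrite inner_delta mxE !eqxx.
  rewrite innerBl !innerBr !innerZl !innerZr ee ez inner_delta z1 conjcK -/w.
  have ww : w * w^*%C = (m k)%:C%C by rewrite mulcJ_modc.
  by rewrite rmorphB rmorph1 /= -ww; ring.
have mk0 : 0 < 1 - m k by rewrite subr_gt0.
exists ((Num.sqrt (1 - m k))^-1%:C%C *: v); last by rewrite innerZr zv mulr0.
rewrite innerZl innerZr vv conjc_real -!rmorphM /= mulrA -expr2 exprVn sqr_sqrtr ?ltW //.
by rewrite mulVf ?gt_eqF.
Qed.

Definition qpartner q z u (s : R) := q^*%C *: z + s%:C%C *: u.

Lemma qpartner_unit q z u (s : R) : inner z z = 1 -> inner u u = 1 -> inner z u = 0 ->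
  s ^+ 2 = 1 - modc q ^+ 2 -> inner (qpartner q z u s) (qpartner q z u s) = 1.
Proof.
move=> z1 u1 zu s2; have uz : inner u z = 0 by rewrite inner_conj zu conjc0.
rewrite /qpartner !innerDl !innerDr !innerZl !innerZr z1 u1 zu uz conjcK conjc_real !mulr1 !mulr0.
rewrite addr0 add0r mulrC mulcJ_modc -rmorphM -expr2 s2 -rmorphD /=.
by rewrite addrC subrK.
Qed.

Lemma inner_qpartner q z u (s : R) : inner z z = 1 -> inner z u = 0 ->
  inner z (qpartner q z u s) = q.
Proof. by move=> z1 zu; rewrite /qpartner innerDr !innerZr z1 zu conjcK mulr1 mulr0 addr0. Qed.

Lemma exists_qpartner q z : (2 <= n)%N -> modc q <= 1 -> inner z z = 1 ->
  exists2 y, inner y y = 1 & inner z y = q.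
Proof.
move=> n2 q1 z1; have [u u1 zu] := exists_orthogonal_unit n2 z1.
have q2 : 0 <= 1 - modc q ^+ 2 by rewrite subr_ge0 expr_le1 ?modc_ge0.
exists (qpartner q z u (Num.sqrt (1 - modc q ^+ 2))); last exact: inner_qpartner.
exact: qpartner_unit (sqr_sqrtr q2).
Qed.

Lemma exists_unit_vector : (0 < n)%N -> exists z : V, inner z z = 1.
Proof. by move=> n0; exists (delta_mx (Ordinal n0) 0); rewrite inner_delta mxE !eqxx. Qed.

Lemma modc_qform_le_wq q Y z : (2 <= n)%N -> modc q <= 1 -> inner z z = 1 ->
  modc q * modc (qform Y z) <= wq q Y.
Proof.
move=> n2 q1 z1; have [u u1 zu] := exists_orthogonal_unit n2 z1.
have q2 : 0 <= 1 - modc q ^+ 2 by rewrite subr_ge0 expr_le1 ?modc_ge0.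
(* <Y z, y+> + <Y z, y-> = 2 q <Y z, z> for the partners y+- := qpartner q z u (+-s). *)
set s := Num.sqrt (1 - modc q ^+ 2).
have s2 : s ^+ 2 = 1 - modc q ^+ 2 by rewrite sqr_sqrtr.
have Ns2 : (- s) ^+ 2 = 1 - modc q ^+ 2 by rewrite sqrrN.
set a := inner (Y *m z) (qpartner q z u s).
set b := inner (Y *m z) (qpartner q z u (- s)).
have ab : a + b = 2%:R * (q * qform Y z).
  by rewrite /a /b /qpartner !innerDr !innerZr conjcK !conjc_real real_complexN /qform; ring.
have m2 : modc (2%:R : R[i]) = 2.
  by rewrite -(rmorph_nat (real_complex R)) modc_real ger0_norm.
have ya := wq_ge Y z1 (qpartner_unit z1 u1 zu s2) (inner_qpartner q s z1 zu).
have yb := wq_ge Y z1 (qpartner_unit z1 u1 zu Ns2) (inner_qpartner q (- s) z1 zu).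
have := le_trans (modcD a b) (lerD ya yb).
by rewrite ab !modcM m2 -mulr2n -[wq q Y *+ 2]mulr_natl ler_pM2l.
Qed.

Lemma sectorial_modc_inner_le t sg X x y : 0 <= t -> 0 < sg -> sg ^+ 2 = 1 + t ^+ 2 ->
  sectorial t X -> 2 * modc (inner (X *m x) y) <= sg * (Re (qform X x) + Re (qform X y)).
Proof.
move=> t0 sg0 sgt SX; have [c cc cP] := unimodular_mul_modc (inner (X *m x) y).
have := sectorial_Re_inner_le (sg%:C%C *: (c *: x)) y t0 SX.
rewrite !qformZ cc mul1r conjc_real -rmorphM -!scalemxAr !innerZl cP -rmorphM Re_realM.
rewrite -expr2 -sgt -[Re (_ %:C%C)]/(sg * modc _) -mulrDr mulrCA expr2 -mulrA ler_pM2l //.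
Qed.

Lemma wq_le_of_Re_qform_le t sg q X Y : (2 <= n)%N -> 0 <= t -> 0 < sg ->
  sg ^+ 2 = 1 + t ^+ 2 -> 0 < modc q -> modc q <= 1 -> sectorial t X ->
  (forall z, Re (qform X z) <= sg ^+ 2 * Re (qform Y z)) ->
  modc q * wq q X <= sg ^+ 3 * wq q Y.
Proof.
move=> n2 t0 sg0 sgt q0 q1 SX XY.
have Yz z : inner z z = 1 -> modc q * Re (qform Y z) <= wq q Y.
  move=> z1; apply: le_trans (modc_qform_le_wq Y n2 q1 z1).
  by rewrite ler_wpM2l ?modc_ge0 ?Re_le_modc.
rewrite mulrC -ler_pdivlMr //; apply: wq_le.
  have [z z1] := exists_unit_vector (ltnW n2).
  by have [y y1 zy] := exists_qpartner n2 q1 z1; exists z, y.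
move=> x y x1 y1 xy; rewrite ler_pdivlMr // mulrC.
have Xxy := sectorial_modc_inner_le x y t0 sg0 sgt SX.
have sg3 : 0 <= sg ^+ 3 by rewrite exprn_ge0 ?ltW.
suff : 2 * (modc q * modc (inner (X *m x) y))
         <= sg ^+ 3 * (modc q * Re (qform Y x) + modc q * Re (qform Y y)).
  by have := ler_wpM2l sg3 (lerD (Yz x x1) (Yz y y1)); lra.
rewrite mulrCA; apply: (le_trans (ler_wpM2l (modc_ge0 q) Xxy)).
rewrite mulrCA exprSr [_ * sg]mulrC -mulrA; apply: ler_wpM2l; first exact: ltW.
rewrite -mulrDr mulrCA; apply: ler_wpM2l; first exact: modc_ge0.
by rewrite mulrDr lerD.
Qed.

End QNumericalRadius.

Theorem mainTheorem9 (R : realType) (n : nat) (alpha : R)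
  (A B C D : 'M[R[i]]_n) (q : R[i]) (f : R -> R) (nu : probability R R) :
  (2 <= n)%N ->
  0 <= alpha -> alpha < pi / 2 ->
  in_Pi alpha A -> in_Pi alpha B -> in_Pi alpha C -> in_Pi alpha D ->
  0 < `|q| -> `|q| <= 1 ->
  in_classF f -> represents nu f ->
  loewner_le (realpart A) (realpart C) ->
  loewner_le (realpart B) (realpart D) ->
  complex.Re `|q| * wq q (sigma_mean nu A B)
    <= (cos alpha ^+ 3)^-1 * wq q (sigma_mean nu C D).
Proof.
move=> n2 a0 a1 PiA PiB PiC PiD q0 q1 _ _ AC BD.
have [PA SA] := (in_Pi_posdef PiA, in_Pi_sectorial PiA).
have [PB SB] := (in_Pi_posdef PiB, in_Pi_sectorial PiB).
have [PC SC] := (in_Pi_posdef PiC, in_Pi_sectorial PiC).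
have [PD SD] := (in_Pi_posdef PiD, in_Pi_sectorial PiD).
have pi2 : 0 < pi / 2 :> R by rewrite divr_gt0 ?pi_gt0.
have cos_gt0 : 0 < cos alpha.
  by apply: cos_gt0_pihalf; rewrite a1 andbT (lt_le_trans _ a0) // oppr_lt0.
have tan_ge0 : 0 <= tan alpha.
  apply: divr_ge0; last exact: ltW.
  by apply: sin_ge0_pi; rewrite a0 /=; have := pi_gt0 R; lra.
rewrite -exprVn; apply: (wq_le_of_Re_qform_le n2 tan_ge0).
- by rewrite invr_gt0.
- by rewrite exprVn cos2_tan2 ?gt_eqF.
- by rewrite modc_lt rmorph0.
- by rewrite modc_le rmorph1.
- exact: sectorial_sigma_mean.
move=> z; rewrite exprVn cos2_tan2 ?gt_eqF //.
exact: Re_qform_sigma_mean_le.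
Qed.
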